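(* In the basic model with $n$ odd, the direction agreement problem can be solved deterministically in $O(1)$ rounds.
   Context: Model (basic): $n>4$ agents are at distinct, arbitrary initial positions on a circle of circumference $1$ and act in synchronised unit-time rounds. Each agent has its own notion of right (clockwise) and left; these need not be consistent across agents. At the start of each round every agent $a$ chooses $\mathrm{dir}_a\in\{\text{right},\text{left}\}$ and moves at unit speed. Agents never pass: two colliding agents instantly reverse direction. There is no communication. At the end of a round each agent learns only the clockwise distance, in its own orientation, from its start-of-round position to its end-of-round position. Agents have distinct IDs in $\{1,\dots,N\}$, $N\ge n$ known, and know the parity of $n$. The direction agreement problem is solved when all agents have a coherent view of which direction is clockwise. *)

From mathcomp Require Import all_boot all_order all_algebra.
From mathcomp Require Import reals.
Set Implicit Arguments. Unset Strict Implicit. Unset Printing Implicit Defensive.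
Import Order.TTheory GRing.Theory Num.Theory.
Local Open Scope ring_scope.

(* The circle of circumference 1 is [0,1); a global "clockwise" is the
   increasing direction.  Agents are indexed by 'I_n (indices carry no
   geometric meaning).  chir a = true  means agent a's "right" is global
   clockwise.  Local directions: true = right, false = left. *)

Definition cwdist (R : realType) (p q : R) : R :=
  if p <= q then q - p else q - p + 1.

Definition rank (R : realType) (n : nat) (pos : 'I_n -> R) (a : 'I_n) : nat :=
  #|[pred b | pos b < pos a]|.

Definition rot_shift (n : nat) (gdir : 'I_n -> bool) : int :=
  \sum_(b : 'I_n) (if gdir b then 1 else -1).

(* Positions after one unit-time round at unit speed with bouncing
   collisions (gdir a = true iff a moves globally clockwise).  Since each
   agent covers distance 1 = circumference, the virtual (pass-through)
   agents end where they started; bouncing preserves cyclic order and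
   conserves total lifted displacement, so the agent of clockwise rank r
   ends at the position of the agent of rank r + rot_shift (mod n). *)
Definition round_pos (R : realType) (n : nat) (pos : 'I_n -> R)
    (gdir : 'I_n -> bool) : 'I_n -> R :=
  fun a =>
    let t := absz ((Posz (rank pos a) + rot_shift gdir) %% Posz n)%Z in
    match [pick b | rank pos b == t] with
    | Some b => pos b
    | None => pos a
    end.

(* Execution of a deterministic algorithm for T rounds.
   choose id hist : the local direction chosen by the agent with ID id given
   its history of observations hist (the algorithm itself is allowed to
   depend on the known N and parity of n). *)
Fixpoint run (R : realType) (n : nat) (choose : nat -> seq R -> bool)
    (chir : 'I_n -> bool) (id : 'I_n -> nat) (pos : 'I_n -> R) (T : nat)
    : ('I_n -> R) * ('I_n -> seq R) :=
  match T with
  | 0 => (pos, fun _ => [::])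
  | T'.+1 =>
      let ph := run choose chir id pos T' in
      let p := ph.1 in
      let h := ph.2 in
      let gdir := fun a => choose (id a) (h a) == chir a in
      let p' := round_pos p gdir in
      (p', fun a => rcons (h a)
                     (if chir a then cwdist (p a) (p' a)
                                else cwdist (p' a) (p a)))
  end.

(* Direction agreement: agent a outputs b_a = "my right is clockwise";
   this designates global clockwise iff b_a == chir a.  Coherent views:
   all agents designate the same global direction. *)
Definition coherent (n : nat) (chir : 'I_n -> bool) (out : 'I_n -> bool) : Prop :=
  exists c : bool, forall a : 'I_n, (out a == chir a) = c.

From mathcomp Require Import all_boot all_order all_algebra.
From mathcomp Require Import reals.
From mathcomp Require Import zify ring lra.
Import Order.TTheory GRing.Theory Num.Theory.
Set Implicit Arguments. Unset Strict Implicit. Unset Printing Implicit Defensive.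
Local Open Scope ring_scope.

(* Every agent moves "right" in two rounds.  A round shifts every agent by k
   clockwise ranks, where k = (#clockwise - #counterclockwise) mod n; for odd n,
   k = 0 only when all agents share the same chirality, and then any common
   output is coherent.  Otherwise each agent ends 2k ranks further clockwise,
   so the clockwise lengths of its two moves add up to less than one lap iff
   2k < n (and to more than one lap iff 2k > n; odd n rules out 2k = n).  An
   agent whose right is counterclockwise observes 2 minus that sum, so the rule
   "my right is clockwise iff my two observations sum to less than 1" makes all
   agents agree. *)

Section Rank.
Variables (R : realType) (n : nat) (q : 'I_n -> R).

Lemma rank_ltn a : (rank q a < n)%N.
Proof.
rewrite /rank -[X in (_ < X)%N]card_ord; apply: proper_card; apply/properP.
by split; [exact/subsetP | exists a; rewrite !inE ?ltxx].
Qed.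

Lemma rank_lt a b : q a < q b -> (rank q a < rank q b)%N.
Proof.
move=> lt_ab; apply: proper_card; apply/properP; split.
  by apply/subsetP => c; rewrite !inE => /lt_trans; apply.
by exists a; rewrite !inE ?ltxx.
Qed.

Lemma rank_comp (s : 'I_n -> 'I_n) :
  injective s -> forall a, rank (fun x => q (s x)) a = rank q (s a).
Proof.
move=> s_inj a; rewrite /rank.
have -> : #|[pred b | q (s b) < q (s a)]| = #|s @^-1: [set b | q b < q (s a)]|.
  by apply: eq_card => x; rewrite !inE.
by rewrite card_preimset //; apply: eq_card => x; rewrite !inE.
Qed.

Hypothesis q_inj : injective q.

Lemma ltr_rank a b : (q a < q b) = (rank q a < rank q b)%N.
Proof.
case: (ltgtP (q a) (q b)) => [/rank_lt -> // | /rank_lt lt_ba | /q_inj ->].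
  by apply/esym/negbTE; rewrite -leqNgt ltnW.
by rewrite ltnn.
Qed.

Lemma rank_inj : injective (rank q).
Proof.
move=> a b eq_ab; apply: q_inj; apply/eqP; rewrite eq_le !leNgt !ltr_rank.
by rewrite eq_ab ltnn.
Qed.

Lemma rank_surj t : (t < n)%N -> exists b, rank q b = t.
Proof.
move=> lt_tn; pose r a := Ordinal (rank_ltn a).
have r_inj : injective r by move=> a b /(congr1 val) /rank_inj.
have /codomP [b /(congr1 val) /= ->] := inj_card_onto r_inj (leqnn _) (Ordinal lt_tn).
by exists b.
Qed.

End Rank.

Lemma modn_add_wrap n r k : (r < n)%N -> (k < n)%N ->
  ((r + k) %% n + n * ((r + k) %% n < r) = r + k)%N.
Proof.
move=> lt_rn lt_kn; case: (ltnP (r + k) n) => [lt_rkn | le_nrk].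
  by rewrite modn_small // ltnNge leq_addr muln0 addn0.
rewrite -{1 2}(subnK le_nrk) modnDr modn_small; last lia.
have -> : (r + k - n < r)%N by lia.
by rewrite muln1 subnK.
Qed.

Section Circle.
Variable R : realType.

Lemma cwdistxx (x : R) : cwdist x x = 0.
Proof. by rewrite /cwdist lexx subrr. Qed.

Lemma cwdistC (x y : R) : x != y -> cwdist y x = 1 - cwdist x y.
Proof. by rewrite /cwdist; case: ltgtP => //= *; ring. Qed.

Variables (n : nat) (q : 'I_n -> R).
Hypotheses (q_inj : injective q) (q_unit : forall a, 0 <= q a < 1).

Lemma cwdist_rank x y :
  cwdist (q x) (q y) = q y - q x + (rank q y < rank q x)%N%:R.
Proof. by rewrite /cwdist leNgt ltr_rank //; case: ltnP; rewrite ?addr0. Qed.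

Lemma lift_lt1 x y (w : nat) :
  (q y - q x + w%:R < 1) = (rank q y + n * w < rank q x + n)%N.
Proof.
have := q_unit x; have := q_unit y; have := rank_ltn q x; have := rank_ltn q y.
case: w => [|[|w]] ry rx /andP [qy0 qy1] /andP [qx0 qx1].
- by rewrite addr0 muln0 addn0 ltn_addl //; lra.
- rewrite muln1 ltn_add2r -ltr_rank //; apply/idP/idP; lra.
- have -> : (q y - q x + w.+2%:R < 1) = false.
    by apply/negbTE; rewrite -leNgt -addn2 natrD; have := ler0n R w; lra.
  by apply/esym/negbTE; rewrite -leqNgt; nia.
Qed.

Lemma lift_gt1 x y (w : nat) :
  (1 < q y - q x + w%:R) = (rank q x + n < rank q y + n * w)%N.
Proof.
have := q_unit x; have := q_unit y; have := rank_ltn q x; have := rank_ltn q y.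
case: w => [|[|w]] ry rx /andP [qy0 qy1] /andP [qx0 qx1].
- have -> : (1 < q y - q x + 0%:R) = false by apply/negbTE; rewrite -leNgt; lra.
  by apply/esym/negbTE; rewrite -leqNgt; lia.
- rewrite muln1 ltn_add2r -ltr_rank //; apply/idP/idP; lra.
- rewrite -addn2 natrD; have := ler0n R w => w0.
  have -> : 1 < q y - q x + (w%:R + 2%:R) by lra.
  by apply/esym; nia.
Qed.

Lemma rank_shift_neq a b k : (0 < k < n)%N ->
  rank q b = ((rank q a + k) %% n)%N -> q a != q b.
Proof.
case/andP=> k_gt0 lt_kn rb; apply/eqP => /q_inj ab; move: rb; rewrite -ab => ra.
have := modn_add_wrap (rank_ltn q a) lt_kn; rewrite -ra.
by case: (_ < _)%N; lia.
Qed.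

Section TwoMoves.
Variables (a b c : 'I_n) (k : nat).
Hypotheses (lt_kn : (k < n)%N) (rb : rank q b = ((rank q a + k) %% n)%N)
  (rc : rank q c = ((rank q b + k) %% n)%N).

Lemma cwdist2E :
  exists w : nat, cwdist (q a) (q b) + cwdist (q b) (q c) = q c - q a + w%:R
                  /\ (rank q c + n * w = rank q a + k.*2)%N.
Proof.
exists ((rank q b < rank q a) + (rank q c < rank q b))%N.
rewrite !cwdist_rank natrD; split; first ring.
have := modn_add_wrap (rank_ltn q a) lt_kn; rewrite -rb.
have := modn_add_wrap (rank_ltn q b) lt_kn; rewrite -rc.
rewrite -addnn; lia.
Qed.

Lemma cwdist2_lt1 :
  (cwdist (q a) (q b) + cwdist (q b) (q c) < 1) = (k.*2 < n)%N.
Proof.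
have [w [-> rw]] := cwdist2E.
by rewrite lift_lt1 rw ltn_add2l.
Qed.

Lemma cwdist2_rev_lt1 : odd n -> (0 < k)%N ->
  (cwdist (q b) (q a) + cwdist (q c) (q b) < 1) = ~~ (k.*2 < n)%N.
Proof.
move=> n_odd k_gt0; have k_range : (0 < k < n)%N by rewrite k_gt0.
rewrite (cwdistC (rank_shift_neq k_range rb)) (cwdistC (rank_shift_neq k_range rc)).
have [w [S_E rw]] := cwdist2E.
have -> : forall x y : R, (1 - x + (1 - y) < 1) = (1 < x + y).
  by move=> x y; apply/idP/idP; lra.
rewrite S_E lift_gt1 rw ltn_add2l -leqNgt [RHS]leq_eqVlt orb_idl // => /eqP n_double.
by move: n_odd; rewrite n_double odd_double.
Qed.

End TwoMoves.

End Circle.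

Section Rotation.
Variables (n : nat) (g : 'I_n -> bool).

Definition rot_offset : nat := absz (rot_shift g %% n)%Z.

Lemma rot_offset_ltn : (0 < n)%N -> (rot_offset < n)%N.
Proof.
move=> n_gt0; have n_gt0' : (0 < n%:Z)%R by rewrite ltz_nat.
rewrite /rot_offset -ltz_nat gez0_abs ?ltz_pmod //.
by rewrite modz_ge0 // lt0r_neq0.
Qed.

Lemma rot_shiftE : rot_shift g = (#|g|.*2)%:Z - n%:Z.
Proof.
rewrite /rot_shift (bigID g) /= (eq_bigr (fun _ => 1)) => [|i ->//].
rewrite [X in _ + X](eq_bigr (fun _ => -1)) => [|i /negbTE ->//].
rewrite !sumr_const mulNrn !natz.
have := cardC g; rewrite card_ord -addnn.
have -> : #|[predC g]| = #|(fun i => ~~ g i)| by apply: eq_card.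
by move: #|g| #|(fun i => ~~ g i)| => c c'; lia.
Qed.

Lemma rot_offset_eq0 : odd n -> rot_offset = 0%N -> exists c, forall a, g a = c.
Proof.
move=> n_odd /eqP; rewrite absz_eq0 rot_shiftE -(modzDr _ n%:Z) subrK modz_nat eqz_nat.
rewrite -/(dvdn n _) -muln2 Gauss_dvdl ?coprimen2 // => dvd_n_g.
have [g0 | g_gt0] := posnP #|g|.
  exists false => a; apply/negbTE/negP => ga.
  have : (0 < #|g|)%N by apply/card_gt0P; exists a.
  by rewrite g0.
exists true => a; apply/negPn/negP => nga.
have : (#|g| < n)%N by rewrite -[X in (_ < X)%N]card_ord; apply/proper_card/properP;
  split; [exact/subsetP | by exists a].
by have := dvdn_leq g_gt0 dvd_n_g; lia.
Qed.

End Rotation.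

Lemma round_posE (R : realType) n (q : 'I_n -> R) g : injective q -> forall a,
  exists b, rank q b = ((rank q a + rot_offset g) %% n)%N /\ round_pos q g a = q b.
Proof.
move=> q_inj a; have n_gt0 : (0 < n)%N by case: a => m /(leq_ltn_trans _); apply.
have offsetE : (rot_shift g %% n)%Z = (rot_offset g)%:Z.
  by rewrite gez0_abs // modz_ge0 // lt0n_neq0.
rewrite /round_pos -modzDmr offsetE -PoszD modz_nat /=.
case: pickP => [b /eqP rb | none]; first by exists b.
have [b rb] := rank_surj q_inj (ltn_pmod (rank q a + rot_offset g) n_gt0).
by have := none b; rewrite rb eqxx.
Qed.

Lemma round_pos2 (R : realType) n (q : 'I_n -> R) g : injective q -> forall a,
  exists b c, [/\ rank q b = ((rank q a + rot_offset g) %% n)%N,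
                  rank q c = ((rank q b + rot_offset g) %% n)%N,
                  round_pos q g a = q b & round_pos (round_pos q g) g a = q c].
Proof.
move=> q_inj; have [s sE] := fin_all_exists (round_posE g q_inj).
have s_inj : injective s.
  move=> x y sxy; apply: (rank_inj q_inj); have := (sE x).1; rewrite sxy (sE y).1.
  by move/eqP; rewrite eqn_modDr !modn_small ?rank_ltn // => /eqP.
have p1E x : round_pos q g x = q (s x) by case: (sE x).
have p1_inj : injective (round_pos q g) by move=> x y; rewrite !p1E => /q_inj /s_inj.
move=> a; have [b [rb p2E]] := round_posE g p1_inj a.
exists (s a), (s b); split; [exact: (sE a).1 | | exact: p1E | by rewrite p2E p1E].
have p1rank x : rank (round_pos q g) x = rank q (s x).
  by rewrite -(rank_comp q s_inj); apply: eq_card => y; rewrite !inE !p1E.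
by rewrite -!p1rank.
Qed.

Theorem proposition2 (R : realType) :
  exists T : nat, forall N : nat,
  exists choose decide : nat -> seq R -> bool,
  forall (n : nat) (pos : 'I_n -> R) (chir : 'I_n -> bool) (id : 'I_n -> nat),
    (4 < n)%N -> odd n -> (n <= N)%N ->
    injective pos -> (forall a, 0 <= pos a < 1) ->
    injective id -> (forall a, 1 <= id a <= N)%N ->
    coherent chir (fun a => decide (id a) ((run choose chir id pos T).2 a)).
Proof.
exists 2%N => N; exists (fun _ _ => true), (fun _ h => nth 0 h 0 + nth 0 h 1 < 1).
move=> n pos chir id n_gt4 n_odd _ pos_inj pos_unit _ _ /=.
set k := rot_offset chir.
have lt_kn : (k < n)%N by apply: rot_offset_ltn; lia.
have [k0 | k_gt0] := posnP k.
  have [c chirE] := rot_offset_eq0 n_odd k0; exists c => a.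
  have [b [c' [rb rc -> ->]]] := round_pos2 chir pos_inj a.
  rewrite -/k k0 !addn0 !modn_small ?rank_ltn // in rb rc.
  rewrite /= (rank_inj pos_inj rc) (rank_inj pos_inj rb) !cwdistxx !if_same addr0 ltr01.
  by rewrite chirE; case: c chirE.
exists (k.*2 < n)%N => a.
have [b [c [rb rc -> ->]]] := round_pos2 chir pos_inj a.
case: (chir a) => /=.
  by rewrite eqb_id (cwdist2_lt1 pos_inj pos_unit lt_kn rb rc).
by rewrite eqbF_neg (cwdist2_rev_lt1 pos_inj pos_unit lt_kn rb rc n_odd k_gt0) negbK.
Qed.
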